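(* Let $n=4$, $m=3$, $b=(1,0,0)^T$, $C=\mathrm{diag}(1,0,0,0)$, and let $A^1,A^2,A^3\in\mathbb{S}^4$ be such that for all $y\in\mathbb{R}^3$ $$C-\sum_{i=1}^3A^iy_i=\begin{pmatrix}1-y_1&0&-y_3&-y_3\\0&-y_2&-y_1&0\\-y_3&-y_1&-y_3&0\\-y_3&0&0&0\end{pmatrix},$$ i.e. $A^1$ has entries $(1,1)=1$, $(2,3)=(3,2)=1$ and zeros elsewhere; $A^2$ has entry $(2,2)=1$ and zeros elsewhere; $A^3$ has entries $(1,3)=(3,1)=(1,4)=(4,1)=(3,3)=1$ and zeros elsewhere. For the associated pair $\mathbf{P},\mathbf{D}$ (with $v(\mathbf{P})=1$, $v(\mathbf{D})=0$), the limiting pd-regularized optimal value function satisfies: 1. $v_a(\theta)=v(\mathbf{P})=1$ for all $\theta\in[0,\pi/2)$; 2. $v_a(\pi/2)=v(\mathbf{D})=0$.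
   Context: $\mathbf{P}$: $\min_X C\bullet X$ s.t. $A^i\bullet X=b_i$ ($i=1,\dots,m$), $X\succeq 0$; $\mathbf{D}$: $\max_y b^Ty$ s.t. $C-\sum_iA^iy_i\succeq 0$; $v(\cdot)$ denotes optimal value. For $\varepsilon,\eta\ge0$: $\mathbf{P}(\varepsilon,\eta)$: $\min_X (C+\varepsilon I)\bullet X$ s.t. $A^i\bullet X=b_i+\eta A^i\bullet I$, $X\succeq0$; $\mathbf{D}(\varepsilon,\eta)$: $\max_y \sum_i(b_i+\eta A^i\bullet I)y_i$ s.t. $C-\sum_iA^iy_i+\varepsilon I\succeq 0$. For $(\varepsilon,\eta)\ne(0,0)$, $v(\varepsilon,\eta)$ is the common optimal value of these two problems, and $v_a(\theta)=\lim_{t\downarrow0}v(t\cos\theta,t\sin\theta)$ for $\theta\in[0,\pi/2]$. *)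

From HB Require Import structures.
From mathcomp Require Import all_boot all_order all_algebra.
From mathcomp Require Import all_classical all_reals all_analysis.
Set Implicit Arguments. Unset Strict Implicit. Unset Printing Implicit Defensive.
Import Order.TTheory GRing.Theory Num.Theory.
Local Open Scope ring_scope.
Local Open Scope classical_set_scope.

Section SDP.
Variables (R : realType) (n m : nat).

Definition frob (A X : 'M[R]_n) : R := \sum_(i < n) \sum_(j < n) A i j * X i j.

Definition psd (X : 'M[R]_n) : Prop :=
  X^T = X /\ forall x : 'cV[R]_n, 0 <= (x^T *m X *m x) 0 0.

Definition P_feas (A : 'I_m -> 'M[R]_n) (b : 'I_m -> R) (X : 'M[R]_n) : Prop :=
  psd X /\ forall i, frob (A i) X = b i.
Definition vP (A : 'I_m -> 'M[R]_n) (b : 'I_m -> R) (C : 'M[R]_n) : \bar R :=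
  ereal_inf [set (frob C X)%:E | X in P_feas A b].

Definition D_feas (A : 'I_m -> 'M[R]_n) (C : 'M[R]_n) (y : 'I_m -> R) : Prop :=
  psd (C - \sum_(i < m) y i *: A i).
Definition vD (A : 'I_m -> 'M[R]_n) (b : 'I_m -> R) (C : 'M[R]_n) : \bar R :=
  ereal_sup [set (\sum_(i < m) b i * y i)%:E | y in D_feas A C].

Definition vreg (A : 'I_m -> 'M[R]_n) (b : 'I_m -> R) (C : 'M[R]_n)
  (eps eta : R) : \bar R :=
  vP A (fun i => b i + eta * frob (A i) 1%:M) (C + eps%:M).

End SDP.

(* The concrete example, n = 4, m = 3 (indices 0-based). *)
Definition exC (R : realType) : 'M[R]_4 :=
  \matrix_(i < 4, j < 4) (if (val i == 0%N) && (val j == 0%N) then 1 else 0).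

Definition exA1 (R : realType) : 'M[R]_4 :=
  \matrix_(i < 4, j < 4)
    (match (val i : nat), (val j : nat) with
     | 0, 0 => 1 | 1, 2 => 1 | 2, 1 => 1 | _, _ => 0 end : R).

Definition exA2 (R : realType) : 'M[R]_4 :=
  \matrix_(i < 4, j < 4)
    (match (val i : nat), (val j : nat) with 1, 1 => 1 | _, _ => 0 end : R).

Definition exA3 (R : realType) : 'M[R]_4 :=
  \matrix_(i < 4, j < 4)
    (match (val i : nat), (val j : nat) with
     | 0, 2 => 1 | 2, 0 => 1 | 0, 3 => 1 | 3, 0 => 1 | 2, 2 => 1
     | _, _ => 0 end : R).

Definition exA (R : realType) (i : 'I_3) : 'M[R]_4 :=
  match (val i : nat) with 0%N => exA1 R | 1%N => exA2 R | _ => exA3 R end.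

Definition exb (R : realType) (i : 'I_3) : R := if val i == 0%N then 1 else 0.

From HB Require Import structures.
From mathcomp Require Import all_boot all_order all_algebra.
From mathcomp Require Import all_classical all_reals all_analysis.
From mathcomp Require Import lra ring.
Set Implicit Arguments.
Unset Strict Implicit.
Import Order.TTheory GRing.Theory Num.Theory.
Local Open Scope ring_scope.
Local Open Scope classical_set_scope.

(* Indices are 0-based, as in the definitions.  The entries of a PSD matrix on
   any pair of coordinates form a PSD 2x2 matrix; in particular a zero diagonal
   entry kills its row.  This settles v(P) = 1 (X_11 = 0 forces X_12 = 0, so
   X_00 = 1) and v(D) = 0 (the zero entry (3,3) of C - sum_i y_i A^i forces
   y_2 = 0, then its entry (2,2) vanishes and forces y_0 = 0).
   For the regularized problem, diag(1 + eta, eta, eta, 0) is feasible, so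
   v(eps, eta) <= 1 + eta + eps (1 + 3 eta), while a weighted sum of the 2x2
   inequalities on {0,3}, {0,2} and {1,2} gives
   v(eps, eta) >= 1 - d - eta (K + 2/K) whenever 2 K^2 <= d eps.  On a ray
   eps = t cos theta > 0, eta = t sin theta, a fixed small d and K of order
   sqrt t send this lower bound to 1 - d.  On the ray eps = 0, X_11 = eta > 0
   leaves room for X_12, so X_00 + 2 X_12 = 1 + eta can be met with X_00 = a
   for every a > 0 and v(0, eta) = 0. *)

Section PsdMatrices.
Variables (R : realType) (n : nat).
Implicit Types (X Y : 'M[R]_n) (u : 'cV[R]_n).

Lemma psd_sym X i j : psd X -> X j i = X i j.
Proof. by case=> /matrixP /(_ i j); rewrite mxE. Qed.

Lemma psdD X Y : psd X -> psd Y -> psd (X + Y).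
Proof.
move=> [XT X0] [YT Y0]; split; first by rewrite linearD /= XT YT.
by move=> x; rewrite mulmxDr mulmxDl mxE addr_ge0.
Qed.

Lemma psdZ c X : 0 <= c -> psd X -> psd (c *: X).
Proof.
move=> c0 [XT X0]; split; first by rewrite linearZ /= XT.
by move=> x; rewrite -scalemxAr -scalemxAl mxE mulr_ge0.
Qed.

Lemma psd_outer u : psd (u *m u^T).
Proof.
split; first by rewrite trmx_mul trmxK.
move=> x; have -> : x^T *m (u *m u^T) *m x = (x^T *m u) *m (x^T *m u)^T.
  by rewrite trmx_mul trmxK !mulmxA.
by rewrite mxE big_ord1 [X in _ * X]mxE -expr2 sqr_ge0.
Qed.

Lemma quad_delta_mx X i j :
  (delta_mx i ord0 : 'cV[R]_n)^T *m X *m delta_mx j ord0 = (X i j)%:M.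
Proof.
by apply/matrixP => k l; rewrite trmx_delta -rowE -colE !ord1 !mxE mulr1n.
Qed.

Lemma psd_quad_pair X i j a b : psd X ->
  0 <= a ^+ 2 * X i i + 2 * a * b * X i j + b ^+ 2 * X j j.
Proof.
move=> hX; have [_ /(_ (a *: delta_mx i ord0 + b *: delta_mx j ord0))] := hX.
rewrite [(_ + _)^T]linearD /= ![(_ *: _)^T]linearZ /= !mulmxDl !mulmxDr.
rewrite -!scalemxAl -!scalemxAr !quad_delta_mx !mxE /= !mulr1n (psd_sym i j hX).
lra.
Qed.

Lemma psd_diag_ge0 X i : psd X -> 0 <= X i i.
Proof. by move=> /(psd_quad_pair i i 1 0); rewrite expr0n /=; lra. Qed.

Lemma psd_row_eq0 X i j : psd X -> X i i = 0 -> X i j = 0.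
Proof.
move=> hX Xii0; apply/eqP/negPn/negP => Xij_neq0.
have := psd_quad_pair i j (- (X j j + 1) / (2 * X i j)) 1 hX.
rewrite Xii0 expr1n mulr0 add0r mul1r mulr1.
have -> : 2 * (- (X j j + 1) / (2 * X i j)) * X i j = - (X j j + 1) by field.
lra.
Qed.

Lemma psd_pair_ge0 X i j p o q : psd X -> 0 < p -> o ^+ 2 <= p * q ->
  0 <= p * X i i + 2 * o * X i j + q * X j j.
Proof.
move=> hX p_gt0 opq; rewrite -(pmulr_rge0 _ p_gt0).
have := psd_quad_pair i j p o hX; have := psd_diag_ge0 j hX.
have : 0 <= p * q - o ^+ 2 by rewrite subr_ge0.
nra.
Qed.

Lemma psd_mxtrace_ge0 X : psd X -> 0 <= \tr X.
Proof. by move=> hX; apply: sumr_ge0 => i _; apply: psd_diag_ge0. Qed.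

End PsdMatrices.

Section Frobenius.
Variables (R : realType) (n : nat).
Implicit Types A B X : 'M[R]_n.

Lemma frobE A X : frob A X = \tr (A *m X^T).
Proof.
by apply: eq_bigr => i _; rewrite mxE; apply: eq_bigr => j _; rewrite mxE.
Qed.

Lemma frobDl A B X : frob (A + B) X = frob A X + frob B X.
Proof. by rewrite !frobE mulmxDl mxtraceD. Qed.

Lemma frob_scalar a X : frob a%:M X = a * \tr X.
Proof. by rewrite frobE mul_scalar_mx mxtraceZ mxtrace_tr. Qed.

Lemma frob_mx1 A : frob A 1%:M = \tr A.
Proof. by rewrite frobE trmx1 mulmx1. Qed.

End Frobenius.

Section OptimalValueBounds.
Variables (R : realType) (n m : nat).
Variables (A : 'I_m -> 'M[R]_n) (b : 'I_m -> R) (C : 'M[R]_n).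
Local Open Scope ereal_scope.

Lemma vP_ge l : (forall X, P_feas A b X -> (l <= frob C X)%R) -> l%:E <= vP A b C.
Proof. by move=> lb; apply: le_ereal_inf_tmp => _ [X /lb + <-]; rewrite lee_fin. Qed.

Lemma vP_le X : P_feas A b X -> vP A b C <= (frob C X)%:E.
Proof. by move=> hX; apply: ereal_inf_lbound; exists X. Qed.

Lemma vD_le u : (forall y, D_feas A C y -> (\sum_(i < m) b i * y i <= u)%R) ->
  vD A b C <= u%:E.
Proof. by move=> ub; apply: ge_ereal_sup => _ [y /ub + <-]; rewrite lee_fin. Qed.

Lemma vD_ge y : D_feas A C y -> (\sum_(i < m) b i * y i)%:E <= vD A b C.
Proof. by move=> hy; apply: ereal_sup_ubound; exists y. Qed.

End OptimalValueBounds.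

Lemma near_bounds_cvge {T : Type} {F : set_system T} {FF : Filter F}
    (R : realType) (f : T -> \bar R) (l : R) :
  (forall e : R, 0 < e -> \forall t \near F, ((l - e)%:E <= f t <= (l + e)%:E)%E) ->
  f @ F --> l%:E.
Proof.
move=> near_bounds; apply/fine_cvgP; split.
  by apply: filterS (near_bounds 1 ltr01) => t /andP[]; case: (f t).
apply/cvgrPdist_le => e e_gt0; apply: filterS (near_bounds e e_gt0) => t /=.
case: (f t) => [r| |] /andP[]; rewrite ?leey ?leNye ?lee_fin //= => le_r r_le.
by rewrite ler_norml; apply/andP; split; lra.
Qed.

Definition i0 : 'I_4 := @Ordinal 4 0 isT.
Definition i1 : 'I_4 := @Ordinal 4 1 isT.
Definition i2 : 'I_4 := @Ordinal 4 2 isT.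
Definition i3 : 'I_4 := @Ordinal 4 3 isT.

Definition j0 : 'I_3 := @Ordinal 3 0 isT.
Definition j1 : 'I_3 := @Ordinal 3 1 isT.
Definition j2 : 'I_3 := @Ordinal 3 2 isT.

Lemma sum4 (V : zmodType) (F : 'I_4 -> V) :
  \sum_(i < 4) F i = F i0 + F i1 + F i2 + F i3.
Proof.
by rewrite !big_ord_recr big_ord0 /= add0r; congr (F _ + F _ + F _ + F _); apply: val_inj.
Qed.

Lemma sum3 (V : zmodType) (F : 'I_3 -> V) : \sum_(i < 3) F i = F j0 + F j1 + F j2.
Proof.
by rewrite !big_ord_recr big_ord0 /= add0r; congr (F _ + F _ + F _); apply: val_inj.
Qed.

Section Example.
Variable R : realType.
Implicit Types X : 'M[R]_4.

Definition vec4 (a b c d : R) : 'cV[R]_4 := \col_k [:: a; b; c; d]`_k.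

Lemma mxtrace4 X : \tr X = X i0 i0 + X i1 i1 + X i2 i2 + X i3 i3.
Proof. by rewrite /mxtrace sum4. Qed.

Lemma frob_exA0 X : psd X -> frob (exA R j0) X = X i0 i0 + 2 * X i1 i2.
Proof. by move=> hX; rewrite /frob !sum4 !mxE /= (psd_sym i1 i2 hX); lra. Qed.

Lemma frob_exA1 X : frob (exA R j1) X = X i1 i1.
Proof. by rewrite /frob !sum4 !mxE /=; lra. Qed.

Lemma frob_exA2 X : psd X -> frob (exA R j2) X = 2 * X i0 i2 + 2 * X i0 i3 + X i2 i2.
Proof.
by move=> hX; rewrite /frob !sum4 !mxE /= (psd_sym i0 i2 hX) (psd_sym i0 i3 hX); lra.
Qed.

Lemma mxtrace_exA i : \tr (exA R i) = 1.
Proof. by case: i => -[|[|[|k]]] ? //; rewrite mxtrace4 !mxE /=; lra. Qed.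

Lemma frob_exC X : frob (exC R) X = X i0 i0.
Proof. by rewrite /frob !sum4 !mxE /=; lra. Qed.

Lemma frob_exC_shift eps X : frob (exC R + eps%:M) X = X i0 i0 + eps * \tr X.
Proof. by rewrite frobDl frob_exC frob_scalar. Qed.

Lemma exC_outer : exC R = vec4 1 0 0 0 *m (vec4 1 0 0 0)^T.
Proof.
apply/matrixP => i j; rewrite !(mxE, big_ord1).
by case: i j => -[|[|[|[|?]]]] ? [[|[|[|[|?]]]] ?] //=; rewrite ?(mulr1, mulr0, mul0r).
Qed.

Lemma P_feas_exP (b : 'I_3 -> R) X :
  P_feas (exA R) b X <->
  [/\ psd X, X i0 i0 + 2 * X i1 i2 = b j0, X i1 i1 = b j1
     & 2 * X i0 i2 + 2 * X i0 i3 + X i2 i2 = b j2].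
Proof.
split=> [[hX hb] | [hX hb0 hb1 hb2]].
  by rewrite -frob_exA0 // -frob_exA1 -frob_exA2.
split=> // i; have [->|->|->] : [\/ i = j0, i = j1 | i = j2].
- by case: i => -[|[|[|?]]] ? //; [constructor 1|constructor 2|constructor 3]; apply: val_inj.
- by rewrite frob_exA0.
- by rewrite frob_exA1.
- by rewrite frob_exA2.
Qed.

Lemma vP_ex : vP (exA R) (exb R) (exC R) = 1%:E.
Proof.
apply/le_anti/andP; split.
  have feas : P_feas (exA R) (exb R) (vec4 1 0 0 0 *m (vec4 1 0 0 0)^T).
    apply/P_feas_exP; split; [exact: psd_outer|..];
      by rewrite /vec4 !(mxE, big_ord1) /exb /=; lra.
  by apply: le_trans (vP_le _ feas) _; rewrite frob_exC /vec4 !(mxE, big_ord1) /= mulr1.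
apply: vP_ge => X /P_feas_exP[hX hb0 hb1 _]; rewrite frob_exC.
have X12 : X i1 i2 = 0 by apply: psd_row_eq0.
by move: hb0; rewrite X12 /exb /=; lra.
Qed.

Lemma vD_ex : vD (exA R) (exb R) (exC R) = 0%:E.
Proof.
apply/le_anti/andP; split.
  apply: vD_le => y; rewrite /D_feas; set Z := exC R - _ => hZ.
  have ZE i j : Z i j =
      exC R i j - (y j0 * exA R j0 i j + y j1 * exA R j1 i j + y j2 * exA R j2 i j).
    by rewrite !mxE sum3 !mxE.
  have y2 : y j2 = 0 by have := psd_row_eq0 (i := i3) i0 hZ; rewrite !ZE !mxE /=; lra.
  have y0 : y j0 = 0 by have := psd_row_eq0 (i := i2) i1 hZ; rewrite !ZE !mxE /= y2; lra.
  by rewrite sum3 /exb /= y0; lra.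
have feas0 : D_feas (exA R) (exC R) (fun=> 0).
  rewrite /D_feas big1 ?subr0 => [|i _]; last exact: scale0r.
  by rewrite exC_outer; apply: psd_outer.
by apply: le_trans (vD_ge _ feas0); rewrite big1 // => i _; rewrite mulr0.
Qed.

Local Notation vreg_ex := (vreg (exA R) (exb R) (exC R)).

Lemma vreg_feas_exP eta X :
  P_feas (exA R) (fun i => exb R i + eta * frob (exA R i) 1%:M) X <->
  [/\ psd X, X i0 i0 + 2 * X i1 i2 = 1 + eta, X i1 i1 = eta
     & 2 * X i0 i2 + 2 * X i0 i3 + X i2 i2 = eta].
Proof. by rewrite P_feas_exP !frob_mx1 !mxtrace_exA /exb /= mulr1 add0r. Qed.

Lemma vreg_ex_ge0 eps eta : 0 <= eps -> (0%:E <= vreg_ex eps eta)%E.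
Proof.
move=> eps_ge0; apply: vP_ge => X /vreg_feas_exP[hX _ _ _].
by rewrite frob_exC_shift addr_ge0 ?mulr_ge0 ?psd_diag_ge0 ?psd_mxtrace_ge0.
Qed.

Lemma vreg_ex_le eps eta : 0 <= eta ->
  (vreg_ex eps eta <= (1 + eta + eps * (1 + 3 * eta))%:E)%E.
Proof.
move=> eta_ge0.
pose X := (1 + eta) *: (vec4 1 0 0 0 *m (vec4 1 0 0 0)^T) +
  eta *: (vec4 0 1 0 0 *m (vec4 0 1 0 0)^T) + eta *: (vec4 0 0 1 0 *m (vec4 0 0 1 0)^T).
have hX : psd X.
  by apply: psdD; [apply: psdD|]; (apply: psdZ; [lra | exact: psd_outer]).
have feas : P_feas (exA R) (fun i => exb R i + eta * frob (exA R i) 1%:M) X.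
  by apply/vreg_feas_exP; split=> //; rewrite /X /vec4 !(mxE, big_ord1) /=; lra.
apply: le_trans (vP_le _ feas) _.
by rewrite frob_exC_shift mxtrace4 /X /vec4 !(mxE, big_ord1) /= lee_fin; lra.
Qed.

Lemma vreg_ex_ge eps eta d K : 0 <= eps -> 0 <= eta -> 0 < d <= 1 -> 0 < K ->
  2 * K ^+ 2 <= d * eps -> ((1 - d - eta * (K + 2 / K))%:E <= vreg_ex eps eta)%E.
Proof.
move=> eps_ge0 eta_ge0 /andP[d_gt0 d_le1] K_gt0 Kde.
apply: vP_ge => X /vreg_feas_exP[hX X00 X11 X22].
have half_d_gt0 : 0 < d / 2 by lra.
have B03 : 0 <= d / 2 * X i0 i0 + 2 * K * X i0 i3 + eps * X i3 i3.
  by apply: psd_pair_ge0 => //; lra.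
have B02 : 0 <= d / 2 * X i0 i0 + 2 * K * X i0 i2 + eps * X i2 i2.
  by apply: psd_pair_ge0 => //; lra.
have B12 : 0 <= 2 / K * eta + 2 * - (1 - d) * X i1 i2 + K / 2 * X i2 i2.
  rewrite -X11; apply: psd_pair_ge0 => //; first by rewrite divr_gt0.
  have -> : 2 / K * (K / 2) = 1 by field; rewrite gt_eqF.
  by rewrite sqrrN; nra.
have KX22 : K * (2 * X i0 i2 + 2 * X i0 i3 + X i2 i2) = K * eta by rewrite X22.
have dX00 : d * (X i0 i0 + 2 * X i1 i2) = d * (1 + eta) by rewrite X00.
(* The objective minus the bound is B03 + B02 + B12 plus these products. *)
have := mulr_ge0 eps_ge0 (psd_diag_ge0 i0 hX).
have := mulr_ge0 (ltW K_gt0) (psd_diag_ge0 i2 hX).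
have := mulr_ge0 eps_ge0 eta_ge0.
have : 0 <= (1 - d) * eta by rewrite mulr_ge0 // subr_ge0.
rewrite frob_exC_shift mxtrace4 X11; lra.
Qed.

Lemma vreg_ex0_le eta a : 0 < eta -> 0 < a -> (vreg_ex 0 eta <= a%:E)%E.
Proof.
move=> eta_gt0 a_gt0.
pose h := (1 + eta - a) / (2 * eta); pose w := (eta - eta * h ^+ 2) / (2 * a).
have h_eq : 2 * (eta * h) = 1 + eta - a by rewrite /h; field; rewrite gt_eqF.
have w_eq : 2 * (a * w) = eta - eta * h ^+ 2 by rewrite /w; field; rewrite gt_eqF.
pose X := a *: (vec4 1 0 0 w *m (vec4 1 0 0 w)^T) + eta *: (vec4 0 1 h 0 *m (vec4 0 1 h 0)^T).
have hX : psd X by apply: psdD; apply: psdZ; rewrite ?ltW //; exact: psd_outer.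
have feas : P_feas (exA R) (fun i => exb R i + eta * frob (exA R i) 1%:M) X.
  by apply/vreg_feas_exP; split=> //; rewrite /X /vec4 !(mxE, big_ord1) /=; lra.
apply: le_trans (vP_le _ feas) _.
by rewrite frob_exC_shift mul0r addr0 /X /vec4 !(mxE, big_ord1) /= lee_fin; lra.
Qed.

Lemma vreg_ex_near_ge c s e : 0 < c <= 1 -> 0 <= s <= 1 -> 0 < e ->
  \forall t \near 0^'+, ((1 - e)%:E <= vreg_ex (t * c) (t * s))%E.
Proof.
move=> /andP[c_gt0 c_le1] /andP[s_ge0 s_le1] e_gt0.
have [e_ge1 | e_lt1] := leP 1 e.
  near=> t; have t_gt0 : 0 < t by near: t; exact: nbhs_right_gt.
  apply: le_trans (vreg_ex_ge0 _ _); rewrite ?lee_fin ?mulr_ge0 //; lra.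
pose rho := e ^+ 2 * c / 32.
have rho_gt0 : 0 < rho by rewrite divr_gt0 // mulr_gt0 // exprn_gt0.
near=> t; have t_gt0 : 0 < t by near: t; exact: nbhs_right_gt.
have t_lt : t < rho ^+ 2 by near: t; apply: nbhs_right_lt; rewrite exprn_gt0.
pose r := Num.sqrt t; have r_gt0 : 0 < r by rewrite sqrtr_gt0.
have t_sq : t = r ^+ 2 by rewrite sqr_sqrtr // ltW.
have r_le : r <= e ^+ 2 * c / 32 by rewrite ltW // -ltr_sqr ?nnegrE ?ltW // -t_sq.
pose K := e * c * r / 4; have K_gt0 : 0 < K by rewrite divr_gt0 // !mulr_gt0.
apply: le_trans (vreg_ex_ge (d := e / 2) (K := K) _ _ _ K_gt0 _); last 4 first.
- by rewrite mulr_ge0 // ltW.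
- by rewrite mulr_ge0 // ltW.
- by apply/andP; split; lra.
- have -> : 2 * K ^+ 2 = e * c / 4 * (e / 2 * (t * c)) by rewrite /K t_sq; field.
  by apply: ler_piMl; [apply: mulr_ge0; apply: mulr_ge0; lra | nra].
have r_le1 : r <= 1 by nra.
have small_K : r ^+ 2 * s * K <= e / 4.
  have : K <= e / 4 by rewrite /K; nra.
  have : r ^+ 2 * s <= 1 by nra.
  nra.
have large_K : r ^+ 2 * s * (2 / K) <= e / 4.
  have -> : r ^+ 2 * s * (2 / K) = 8 * r * s / (e * c).
    by rewrite /K; field; rewrite !gt_eqF.
  rewrite ler_pdivrMr ?mulr_gt0 //; nra.
rewrite lee_fin t_sq; nra.
Unshelve. all: by end_near.
Qed.

Lemma vreg_ex_cvg c s : 0 < c <= 1 -> 0 <= s <= 1 ->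
  (fun t => vreg_ex (t * c) (t * s)) @ 0^'+ --> 1%:E.
Proof.
move=> c01 s01; have /andP[c_gt0 c_le1] := c01; have /andP[s_ge0 s_le1] := s01.
apply: near_bounds_cvge => e e_gt0; near=> t; apply/andP; split.
  by near: t; exact: vreg_ex_near_ge.
have t_gt0 : 0 < t by near: t; exact: nbhs_right_gt.
have t_lt : t < Num.min 1 (e / 5).
  by near: t; apply: nbhs_right_lt; rewrite lt_min ltr01 divr_gt0.
move: t_lt; rewrite lt_min => /andP[t_lt1 t_lt_e].
have ts_ge0 := mulr_ge0 (ltW t_gt0) s_ge0.
have ts_le := ler_piMr (ltW t_gt0) s_le1.
apply: le_trans (vreg_ex_le _ ts_ge0) _; rewrite lee_fin.
have : t * c * (1 + 3 * (t * s)) <= t * 4.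
  apply: ler_pM; [exact: mulr_ge0 (ltW t_gt0) (ltW c_gt0) | lra | | lra].
  exact: ler_piMr (ltW t_gt0) c_le1.
lra.
Unshelve. all: by end_near.
Qed.

Lemma vreg_ex0_cvg : (fun t => vreg_ex 0 t) @ 0^'+ --> 0%:E.
Proof.
apply: near_bounds_cvge => e e_gt0; near=> t.
have t_gt0 : 0 < t by near: t; exact: nbhs_right_gt.
rewrite sub0r add0r vreg_ex0_le // andbT.
by apply: le_trans (vreg_ex_ge0 _ (lexx 0)); rewrite lee_fin oppr_le0 ltW.
Unshelve. all: by end_near.
Qed.

End Example.

Theorem theorem3 (R : realType) :
  vP (exA R) (exb R) (exC R) = 1%:E /\
  vD (exA R) (exb R) (exC R) = 0%:E /\
  (forall theta : R, 0 <= theta -> theta < pi / 2 ->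
     (fun t : R => vreg (exA R) (exb R) (exC R) (t * cos theta) (t * sin theta))
       @ 0^'+ --> vP (exA R) (exb R) (exC R)) /\
  ((fun t : R => vreg (exA R) (exb R) (exC R) (t * cos (pi / 2)) (t * sin (pi / 2)))
       @ 0^'+ --> vD (exA R) (exb R) (exC R)).
Proof.
split; first exact: vP_ex.
split; first exact: vD_ex.
have pihalf_gt0 : 0 < pi / 2 :> R by rewrite divr_gt0 // pi_gt0.
split=> [theta theta_ge0 theta_lt|]; last first.
  rewrite vD_ex cos_pihalf sin_pihalf.
  under eq_fun do rewrite mulr0 mulr1.
  exact: vreg_ex0_cvg.
rewrite vP_ex; apply: vreg_ex_cvg; rewrite ?cos_le1 ?sin_le1 andbT.
  by apply: cos_gt0_pihalf; rewrite theta_lt andbT; lra.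
by apply: sin_ge0_pi; rewrite theta_ge0 /=; lra.
Qed.
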